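(* Let $\Delta\in\mathbb F^{m\times m}$ be a connection matrix with column/row partition $J_0,\dots,J_b$. Let $\Delta^m$ be the last matrix produced by the Incremental Sweeping Algorithm (ISA) applied to $\Delta$, and let $\Delta(1)^m,\dots,\Delta(b)^m$ be the matrices produced by the Block Sequential Sweeping Algorithm applied to $\Delta$. Then $\Delta^m_{J_{k-1}J_k}=\Delta(k)^m_{J_{k-1}J_k}$ for $k=1,\dots,b$. Moreover, for each iteration $r$, the set of positions marked as primary pivots (resp. change-of-basis pivots) at iteration $r$ in the ISA run on $\Delta$ equals the union over $k=1,\dots,b$ of the sets of positions marked as primary pivots (resp. change-of-basis pivots) at iteration $r$ in the ISA runs on $\Delta(k)$.
   Context: Throughout, $\mathbb F$ is a field and $m\ge1$. $A_{IJ}$ is the submatrix of $A$ with rows in $I$, columns in $J$. $U^{pq}$ is the $m\times m$ matrix whose only nonzero entry is a $1$ in position $(p,q)$. Superscripts on matrices are indices, not powers. A connection matrix (over $\mathbb F$) is a matrix $\Delta\in\mathbb F^{m\times m}$ together with a partition $\{1,\dots,m\}=J_0\sqcup\cdots\sqcup J_b$ (the column/row partition; the $J_k$ need not consist of consecutive integers) such that $\Delta$ is upper triangular, $\Delta\Delta=0$, and $\Delta_{ij}=0$ unless $i<j$ and $(i,j)\in\bigcup_{k=1}^bJ_{k-1}\times J_k$. For $1\le r\le m-1$ the $r$-th diagonal is $\{(j-r,j):r<j\le m\}$. Incremental Sweeping Algorithm (ISA) applied to a connection matrix $\Delta$: set $\Delta^0=\Delta^1=\Delta$. For $r=1,\dots,m-1$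 in turn: (Markup) for every position $(j-r,j)$ on the $r$-th diagonal with $\Delta^r_{j-r,j}\ne0$ such that no position in column $j$ was marked as a primary pivot at an earlier iteration: if some position $(j-r,p)$ of row $j-r$ was marked as a primary pivot at an earlier iteration, mark $(j-r,j)$ as a change-of-basis pivot of iteration $r$; otherwise mark $(j-r,j)$ permanently as a primary pivot (marked at iteration $r$). (Update) Let $T^r=I-\sum \frac{\Delta^r_{j-r,j}}{\Delta^r_{j-r,p}}U^{pj}$, the sum running over all change-of-basis pivots $(j-r,j)$ of iteration $r$, where $(j-r,p)$ is the primary pivot position in row $j-r$; set $\Delta^{r+1}=(T^r)^{-1}\Delta^rT^r$. Block Sequential Sweeping Algorithm applied to $\Delta$: set $\mathcal J_0=\emptyset$. For $k=1,\dots,b$ in turn: let $\Delta(k)$ be the matrix that agrees with $\Delta$ at the positions in $(J_{k-1}\setminus\mathcal J_{k-1})\times J_k$ and is zero elsewhere (a connection matrix with the same partition); apply ISA to $\Delta(k)$, obtaining $\Delta(k)^0,\dots,\Delta(k)^m$; let $\mathcal J_k$ be the set of indices of columns containing primary pivot positions in this run. *)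

From HB Require Import structures.
From mathcomp Require Import all_boot all_order all_algebra.
Set Implicit Arguments. Unset Strict Implicit. Unset Printing Implicit Defensive.
Import Order.TTheory GRing.Theory Num.Theory.
Local Open Scope ring_scope.

Section ISA.
Variables (F : fieldType) (m : nat).

(* Indices 1..m of the paper are represented by 'I_m (0..m-1); positions are
   pairs (row, column).  The partition J_0,...,J_b is given by a block map
   blk : 'I_m -> nat, with J_k = [set i | blk i == k]. *)

Definition pos := ('I_m * 'I_m)%type.

Definition connection_matrix (b : nat) (blk : 'I_m -> nat) (D : 'M[F]_m) : Prop :=
  [/\ forall i, (blk i <= b)%N,
      forall i j : 'I_m, (j < i)%N -> D i j = 0,
      D *m D = 0 &
      forall i j : 'I_m, D i j != 0 -> (i < j)%N /\ blk j = (blk i).+1 ].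

Definition on_diag (r : nat) (ij : pos) : bool := (val ij.2 == val ij.1 + r)%N.

Record isa_state := IsaState { st_mat : 'M[F]_m ; st_prims : {set pos} }.

Definition col_has_prim (P : {set pos}) (j : 'I_m) : bool :=
  [exists i : 'I_m, (i, j) \in P].
Definition row_has_prim (P : {set pos}) (i : 'I_m) : bool :=
  [exists j : 'I_m, (i, j) \in P].

(* Markup of iteration r, performed on state s (whose matrix is Delta^r and
   whose primary set contains the primary pivots of iterations < r). *)
Definition markP (r : nat) (s : isa_state) : {set pos} :=
  [set ij : pos | [&& on_diag r ij, st_mat s ij.1 ij.2 != 0,
                     ~~ col_has_prim (st_prims s) ij.2 &
                     ~~ row_has_prim (st_prims s) ij.1]].
Definition markC (r : nat) (s : isa_state) : {set pos} :=
  [set ij : pos | [&& on_diag r ij, st_mat s ij.1 ij.2 != 0,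
                     ~~ col_has_prim (st_prims s) ij.2 &
                     row_has_prim (st_prims s) ij.1]].

Definition prim_col (P : {set pos}) (i : 'I_m) (dflt : 'I_m) : 'I_m :=
  odflt dflt [pick q : 'I_m | (i, q) \in P].

Definition U (p q : 'I_m) : 'M[F]_m := delta_mx p q.

Definition Tmat (r : nat) (s : isa_state) : 'M[F]_m :=
  1%:M - \sum_(ij in markC r s)
           (st_mat s ij.1 ij.2 / st_mat s ij.1 (prim_col (st_prims s) ij.1 ij.2))
             *: U (prim_col (st_prims s) ij.1 ij.2) ij.2.

Definition isa_step (r : nat) (s : isa_state) : isa_state :=
  IsaState (invmx (Tmat r s) *m st_mat s *m Tmat r s) (st_prims s :|: markP r s).

(* isa_run D r = state after iterations 1..r; its matrix is Delta^{r+1}. *)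
Fixpoint isa_run (D : 'M[F]_m) (r : nat) : isa_state :=
  match r with
  | 0 => IsaState D set0
  | r'.+1 => isa_step r'.+1 (isa_run D r')
  end.

(* Delta^r for r >= 1 (Delta^0 = Delta^1 = Delta) *)
Definition isa_mat (D : 'M[F]_m) (r : nat) : 'M[F]_m := st_mat (isa_run D r.-1).

Definition isa_prim_at (D : 'M[F]_m) (r : nat) : {set pos} := markP r (isa_run D r.-1).
Definition isa_cob_at (D : 'M[F]_m) (r : nat) : {set pos} := markC r (isa_run D r.-1).

Definition isa_all_prims (D : 'M[F]_m) : {set pos} := st_prims (isa_run D m.-1).

Definition prim_cols (D : 'M[F]_m) : {set 'I_m} :=
  [set j : 'I_m | col_has_prim (isa_all_prims D) j].

Definition Dblock (blk : 'I_m -> nat) (D : 'M[F]_m) (k : nat) (Jprev : {set 'I_m})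
  : 'M[F]_m :=
  \matrix_(i, j) (if [&& blk i == k.-1, i \notin Jprev & blk j == k]%N
                  then D i j else 0).

Fixpoint bssa_J (blk : 'I_m -> nat) (D : 'M[F]_m) (k : nat) : {set 'I_m} :=
  match k with
  | 0 => set0
  | k'.+1 => prim_cols (Dblock blk D k'.+1 (bssa_J blk D k'))
  end.

Definition bssa_D (blk : 'I_m -> nat) (D : 'M[F]_m) (k : nat) : 'M[F]_m :=
  Dblock blk D k (bssa_J blk D k.-1).

End ISA.

From HB Require Import structures.
From mathcomp Require Import all_boot all_order all_algebra.
From mathcomp Require Import zify.
Set Implicit Arguments. Unset Strict Implicit. Unset Printing Implicit Defensive.
Import GRing.Theory.
Local Open Scope ring_scope.

(* An ISA iteration conjugates by [T = 1 - N] with [N *m N = 0]: the rows of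
   [N] are primary pivot columns, while its columns are columns of
   change-of-basis pivots, which carry no primary pivot.  Hence an iteration is
   [D |-> (1 + N) D (1 - N)]: column operations inside a block of columns,
   followed by row operations that only move rows indexed by primary pivot
   columns.  Along the run, [D] keeps its block pattern and [D *m D = 0],
   primary pivots stay nonzero and are unique in their row and column, and every
   nonzero entry of the swept band lies above a primary pivot of its column.
   After the last iteration this forces the row of every pivot column to vanish,
   so no index is both a pivot row and a pivot column.

   The run on [Delta(k)] is then simulated by the run on [Delta]: on the rows of
   [J_(k-1)] outside [calJ_(k-1)] and the columns of [J_k] both runs perform the
   same column operations and mark the same pivots, whereas the rows in
   [calJ_(k-1)], being pivot columns of the previous block, vanish in both final
   matrices. *)

Lemma neq0_sumr_exists (R : nmodType) (I : finType) (P : pred I) (f : I -> R) :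
  \sum_(i | P i) f i != 0 -> exists2 i, P i & f i != 0.
Proof.
move=> nz; have /exists_inP [i Pi fi] : [exists i in P, f i != 0].
  apply: contraNT nz => /exists_inPn f0.
  by apply/eqP/big1 => i Pi; apply/eqP; rewrite -[_ == 0]negbK f0.
by exists i.
Qed.

Lemma neq0_mulf (R : idomainType) (x y : R) : x * y != 0 -> x != 0 /\ y != 0.
Proof. by rewrite mulf_eq0 negb_or => /andP. Qed.

Lemma neq0_addr (R : zmodType) (x y : R) : x + y != 0 -> x != 0 \/ y != 0.
Proof.
by have [-> | ] := eqVneq x 0; [rewrite add0r; right | left].
Qed.

Lemma neq0_subr (R : zmodType) (x y : R) : x - y != 0 -> x != 0 \/ y != 0.
Proof. by move=> /neq0_addr[]; [left | rewrite oppr_eq0; right]. Qed.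

Lemma in_bigcup_nat (T : finType) (s : seq nat) (G : nat -> {set T}) x :
  (x \in \bigcup_(k <- s) G k) = has (fun k => x \in G k) s.
Proof.
elim: s => [|k s IH]; first by rewrite big_nil inE.
by rewrite big_cons in_setU IH.
Qed.

Lemma bigcup_fibers (T : finType) (S : {set T}) (f : T -> nat) (lo hi : nat) :
  {in S, forall x, lo <= f x < hi}%N ->
  S = \bigcup_(lo <= k < hi) [set x in S | f x == k].
Proof.
move=> f_range; apply/setP => x; rewrite in_bigcup_nat.
have [xS | xNS] := boolP (x \in S).
  by apply/esym/hasP; exists (f x); rewrite ?mem_index_iota ?f_range // inE xS eqxx.
by apply/esym/hasP => -[k _]; rewrite inE (negbTE xNS).
Qed.

Section SweepStep.
Variables (F : fieldType) (m : nat).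
Implicit Types (s : isa_state F m) (P : {set pos m}) (r : nat).

Definition sweep_coef s (ij : pos m) : F :=
  st_mat s ij.1 ij.2 / st_mat s ij.1 (prim_col (st_prims s) ij.1 ij.2).

Definition sweep_mx r s : 'M[F]_m :=
  \sum_(ij in markC r s) sweep_coef s ij *: U F (prim_col (st_prims s) ij.1 ij.2) ij.2.

Lemma TmatE r s : Tmat r s = 1%:M - sweep_mx r s.
Proof. by []. Qed.

Lemma in_markC r s i j : ((i, j) \in markC r s) =
  [&& on_diag r (i, j), st_mat s i j != 0, ~~ col_has_prim (st_prims s) j &
      row_has_prim (st_prims s) i].
Proof. by rewrite inE. Qed.

Lemma in_markP r s i j : ((i, j) \in markP r s) =
  [&& on_diag r (i, j), st_mat s i j != 0, ~~ col_has_prim (st_prims s) j &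
      ~~ row_has_prim (st_prims s) i].
Proof. by rewrite inE. Qed.

Lemma prim_col_mem P i d : row_has_prim P i -> (i, prim_col P i d) \in P.
Proof.
move=> /existsP [q Pq]; rewrite /prim_col.
by case: pickP => [// | /(_ q)]; rewrite Pq.
Qed.

Lemma markC_prim_col r s i j : (i, j) \in markC r s ->
  (i, prim_col (st_prims s) i j) \in st_prims s.
Proof. by rewrite in_markC => /and4P [_ _ _ /prim_col_mem]. Qed.

Lemma on_diag_col_inj r (x y : pos m) :
  on_diag r x -> on_diag r y -> x.2 = y.2 -> x = y.
Proof.
case: x y => [x1 x2] [y1 y2]; rewrite /on_diag /= => /eqP dx /eqP dy e; subst y2.
by congr pair; apply: val_inj; apply/eqP; rewrite -(eqn_add2r r) -dx -dy.
Qed.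

Lemma sweep_mxE r s l c : sweep_mx r s l c =
  \sum_(ij in markC r s) sweep_coef s ij *
     ((l == prim_col (st_prims s) ij.1 ij.2) && (c == ij.2))%:R.
Proof. by rewrite summxE; apply: eq_bigr => ij _; rewrite !mxE. Qed.

(* A column meets the [r]-th diagonal once, hence carries at most one
   change-of-basis pivot. *)
Lemma sweep_mx_cob_col r s a c l : (a, c) \in markC r s ->
  sweep_mx r s l c = if l == prim_col (st_prims s) a c then sweep_coef s (a, c) else 0.
Proof.
move=> Cac; rewrite sweep_mxE (bigD1 (a, c)) //= eqxx andbT big1 ?addr0.
  by case: eqP; rewrite ?mulr1 ?mulr0.
move=> [x y] /andP [Cxy ne]; have [e | ] := eqVneq c y; last by rewrite andbF mulr0.
move: ne; rewrite (@on_diag_col_inj r (x, y) (a, c)) ?eqxx //=.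
  by move: Cxy; rewrite in_markC => /and4P [].
by move: Cac; rewrite in_markC => /and4P [].
Qed.

Lemma sweep_mx_neq0 r s l c : sweep_mx r s l c != 0 ->
  exists a, (a, c) \in markC r s /\ l = prim_col (st_prims s) a c.
Proof.
rewrite sweep_mxE => /neq0_sumr_exists [[x y] /= Cxy].
case: (eqVneq l (prim_col (st_prims s) x y)) => [-> | _];
  case: (eqVneq c y) => [-> | _]; rewrite ?andbF ?mulr0 ?eqxx //.
by exists x.
Qed.

Lemma sweep_mx_col0 r s l c : (forall a, (a, c) \notin markC r s) ->
  sweep_mx r s l c = 0.
Proof.
move=> noC; apply/eqP; apply: contraT => /sweep_mx_neq0 [a [Cac _]].
by rewrite (negbTE (noC a)) in Cac.
Qed.

(* The rows of the sweep matrix are primary pivot columns, and the columns of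
   change-of-basis pivots carry no primary pivot. *)
Lemma sweep_mx_sqr0 r s : sweep_mx r s *m sweep_mx r s = 0.
Proof.
apply/matrixP => a c; rewrite !mxE; apply: big1 => l _.
have [-> | /sweep_mx_neq0 [x [Cxl _]]] := eqVneq (sweep_mx r s a l) 0; first by rewrite mul0r.
have [-> | /sweep_mx_neq0 [y [Cyc El]]] := eqVneq (sweep_mx r s l c) 0; first by rewrite mulr0.
suff : col_has_prim (st_prims s) l.
  by move: Cxl; rewrite in_markC => /and4P [_ _ /negP no_prim _] /no_prim.
by apply/existsP; exists y; rewrite El; apply: markC_prim_col Cyc.
Qed.

Lemma Tmat_mulV r s : Tmat r s *m (1%:M + sweep_mx r s) = 1%:M.
Proof. by rewrite TmatE mulmxDr mulmx1 mulmxBl mul1mx sweep_mx_sqr0 subr0 subrK. Qed.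

Lemma Tmat_unit r s : Tmat r s \in unitmx.
Proof. by have [] := mulmx1_unit (Tmat_mulV r s). Qed.

Lemma invmx_Tmat r s : invmx (Tmat r s) = 1%:M + sweep_mx r s.
Proof. by rewrite -[RHS](mulKmx (Tmat_unit r s)) Tmat_mulV mulmx1. Qed.

Definition col_swept r s : 'M[F]_m := st_mat s *m Tmat r s.

Lemma col_sweptE r s a c :
  col_swept r s a c = st_mat s a c - \sum_l st_mat s a l * sweep_mx r s l c.
Proof. by rewrite /col_swept TmatE mulmxBr mulmx1 !mxE. Qed.

Lemma isa_step_matE r s a c : st_mat (isa_step r s) a c =
  col_swept r s a c + \sum_l sweep_mx r s a l * col_swept r s l c.
Proof. by rewrite /= invmx_Tmat -mulmxA mulmxDl mul1mx !mxE. Qed.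

End SweepStep.

Section Invariant.
Variables (F : fieldType) (m : nat) (blk : 'I_m -> nat).

(* The invariant after [n] iterations.  [inv_band] is what makes a fully swept
   matrix vanish on the rows indexed by pivot columns ([prim_col_row0]). *)
Record isa_inv (s : isa_state F m) (n : nat) : Prop := {
  inv_supp : forall a c : 'I_m, st_mat s a c != 0 -> (a < c)%N /\ blk c = (blk a).+1;
  inv_sqr0 : st_mat s *m st_mat s = 0;
  inv_prim : forall i p : 'I_m, (i, p) \in st_prims s -> st_mat s i p != 0 /\ (p <= i + n)%N;
  inv_col_uniq : forall i1 i2 p : 'I_m,
    (i1, p) \in st_prims s -> (i2, p) \in st_prims s -> i1 = i2;
  inv_row_uniq : forall i p1 p2 : 'I_m,
    (i, p1) \in st_prims s -> (i, p2) \in st_prims s -> p1 = p2;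
  inv_band : forall a c : 'I_m, (c <= a + n)%N -> st_mat s a c != 0 ->
    exists2 i : 'I_m, (a <= i)%N & (i, c) \in st_prims s
}.

Section Step.
Variables (s : isa_state F m) (n : nat).
Hypothesis inv : isa_inv s n.
Let M := st_mat s.
Let P := st_prims s.
Let r := n.+1.
Let C := markC r s.
Let Pn := markP r s.

Lemma cob_facts (i c : 'I_m) : (i, c) \in C ->
  [/\ (c = i + r :> nat)%N, M i c != 0, ~~ col_has_prim P c & (i, prim_col P i c) \in P].
Proof.
move=> Cic; have Piq := markC_prim_col Cic.
by move: Cic; rewrite in_markC => /and4P [/eqP].
Qed.

Lemma new_prim_facts (i c : 'I_m) : (i, c) \in Pn ->
  [/\ (c = i + r :> nat)%N, M i c != 0, ~~ col_has_prim P c & ~~ row_has_prim P i].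
Proof. by rewrite in_markP => /and4P [/eqP]. Qed.

Lemma prim_facts (i p : 'I_m) : (i, p) \in P ->
  [/\ M i p != 0, (i < p)%N, (p <= i + n)%N & blk p = (blk i).+1].
Proof. by move=> /(inv_prim inv) [nz ?]; have [] := inv_supp inv nz. Qed.

Lemma sweep_mx_neq0_cob (l c : 'I_m) : sweep_mx r s l c != 0 ->
  exists i, [/\ (i, c) \in C, (c = i + r :> nat)%N, (i, l) \in P & ~~ col_has_prim P c].
Proof.
move=> /sweep_mx_neq0 [i [Cic ->]]; exists i.
by have [? _ ? ?] := cob_facts Cic.
Qed.

Lemma col_swept_supp (a c : 'I_m) : col_swept r s a c != 0 -> (a < c)%N /\ blk c = (blk a).+1.
Proof.
rewrite col_sweptE => /neq0_subr [/(inv_supp inv) // | /neq0_sumr_exists [l _]].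
move=> /neq0_mulf [/(inv_supp inv) [al bl] /sweep_mx_neq0_cob [i [Cic ci Pil _]]].
have [_ _ li bli] := prim_facts Pil.
have [_ /(inv_supp inv) [_ bci] _ _] := cob_facts Cic.
by split; [lia | rewrite bci -bli bl].
Qed.

Lemma isa_step_supp (a c : 'I_m) :
  st_mat (isa_step r s) a c != 0 -> (a < c)%N /\ blk c = (blk a).+1.
Proof.
rewrite isa_step_matE => /neq0_addr [/col_swept_supp // | /neq0_sumr_exists [l _]].
move=> /neq0_mulf [/sweep_mx_neq0_cob [i [Cil li Pia _]] /col_swept_supp [lc blc]].
have [_ _ ai bai] := prim_facts Pia.
have [_ /(inv_supp inv) [_ bli] _ _] := cob_facts Cil.
by split; [lia | rewrite blc bli -bai].
Qed.

Lemma sweep_mx_prim_col (p : 'I_m) : col_has_prim P p \/ (exists x, (x, p) \in Pn) ->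
  forall l, sweep_mx r s l p = 0.
Proof.
move=> Pp l; apply/eqP; apply: contraT => /sweep_mx_neq0_cob [i [Cip pi _ noPp]].
case: Pp => [Pp | [x Pnxp]]; first by rewrite Pp in noPp.
have [px _ _ noPx] := new_prim_facts Pnxp.
have exi : x = i by apply: val_inj => /=; lia.
by move: Cip noPx; rewrite exi in_markC => /and4P [_ _ _ ->].
Qed.

Lemma col_swept_prim_col (p : 'I_m) : col_has_prim P p \/ (exists x, (x, p) \in Pn) ->
  forall l, col_swept r s l p = M l p.
Proof.
by move=> Pp l; rewrite col_sweptE big1 ?subr0 // => l' _; rewrite sweep_mx_prim_col ?mulr0.
Qed.

Lemma isa_step_prim_entry (i p : 'I_m) : (i, p) \in P \/ (i, p) \in Pn ->
  st_mat (isa_step r s) i p = M i p.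
Proof.
move=> Pip.
have Pp : col_has_prim P p \/ exists x, (x, p) \in Pn.
  by case: Pip => ?; [left; apply/existsP | right]; exists i.
rewrite isa_step_matE col_swept_prim_col // big1 ?addr0 // => l _.
rewrite col_swept_prim_col //; apply/eqP; apply: contraT.
move=> /neq0_mulf [/sweep_mx_neq0_cob [i' [_ li' Pi'i _]] Mlp].
have [_ _ ii' _] := prim_facts Pi'i.
have [i1 li1 Pi1p] : exists2 i1 : 'I_m, (l <= i1)%N & (i1, p) \in P.
  apply: (inv_band inv) Mlp; case: Pip => [/prim_facts [] | /new_prim_facts []]; lia.
case: Pip => [Pip | /new_prim_facts [_ _ /existsPn /(_ i1)]]; last by rewrite Pi1p.
by move: (inv_col_uniq inv Pip Pi1p) li1 => <-; lia.
Qed.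

Lemma col_swept_cob0 (a c : 'I_m) : (a, c) \in C -> col_swept r s a c = 0.
Proof.
move=> Cac; have [_ _ _ Paq] := cob_facts Cac; have [Maq _ _ _] := prim_facts Paq.
rewrite col_sweptE (bigD1 (prim_col P a c)) //= big1 ?addr0.
  by rewrite (sweep_mx_cob_col _ Cac) eqxx /sweep_coef mulrC divfK // subrr.
by move=> l /negPf nlq; rewrite (sweep_mx_cob_col _ Cac) nlq mulr0.
Qed.

Lemma band_entry0 (a c : 'I_m) : (c <= a + r)%N ->
  (forall i : 'I_m, (a <= i)%N -> (i, c) \notin P :|: Pn) -> (a, c) \notin C ->
  M a c = 0.
Proof.
move=> ca noP NCac; apply/eqP; apply: contraT => Mac.
have [can | nac] := leqP c (a + n).
  by have [i ai Pic] := inv_band inv can Mac; move: (noP i ai); rewrite inE Pic.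
have noPc : ~~ col_has_prim P c.
  apply/negP => /existsP [i Pic]; have [_ _ ci _] := prim_facts Pic.
  suff /noP : (a <= i)%N by rewrite inE Pic.
  lia.
have diag : on_diag r (a, c) by rewrite /on_diag; apply/eqP => /=; lia.
move: (noP a (leqnn a)) NCac; rewrite !inE /= diag Mac noPc /=.
by case: (row_has_prim _ a); rewrite ?orbT.
Qed.

Lemma col_swept_band0 (a c : 'I_m) : (c <= a + r)%N ->
  (forall i : 'I_m, (a <= i)%N -> (i, c) \notin P :|: Pn) -> col_swept r s a c = 0.
Proof.
move=> ca noP; have [/col_swept_cob0 // | NCac] := boolP ((a, c) \in C).
rewrite col_sweptE band_entry0 // sub0r big1 ?oppr0 // => l _.
apply/eqP; apply: contraT => /neq0_mulf [Mal /sweep_mx_neq0_cob [i [Cic ci Pil _]]].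
have [_ il li _] := prim_facts Pil.
have ia : (i < a)%N.
  case: (ltngtP i a) => [// | ? | /val_inj eia]; first lia.
  by move: Cic; rewrite eia (negbTE NCac).
have /(inv_band inv)/(_ Mal) [i1 ai1 Pi1l] : (l <= a + n)%N by lia.
by move: (inv_col_uniq inv Pil Pi1l) ai1 => <-; lia.
Qed.

Lemma isa_step_band (a c : 'I_m) : (c <= a + r)%N -> st_mat (isa_step r s) a c != 0 ->
  exists2 i : 'I_m, (a <= i)%N & (i, c) \in st_prims (isa_step r s).
Proof.
move=> ca; have [/exists_inP [i ai Pic] _ | /exists_inPn noP] :=
  boolP [exists i in [pred i : 'I_m | a <= i]%N, (i, c) \in P :|: Pn]; first by exists i.
rewrite isa_step_matE col_swept_band0 // add0r => /neq0_sumr_exists [l _].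
move=> /neq0_mulf [/sweep_mx_neq0_cob [i [_ li Pia _]]].
have [_ _ ai _] := prim_facts Pia.
rewrite col_swept_band0 ?eqxx //; first lia.
by move=> i1 li1; apply: noP; rewrite inE; lia.
Qed.

Lemma isa_step_sqr0 : st_mat (isa_step r s) *m st_mat (isa_step r s) = 0.
Proof.
rewrite /= !mulmxA mulmxK ?Tmat_unit // -(mulmxA _ (st_mat s) (st_mat s)) (inv_sqr0 inv).
by rewrite mulmx0 mul0mx.
Qed.

Lemma isa_step_inv : isa_inv (isa_step r s) r.
Proof.
have primsE : st_prims (isa_step r s) = P :|: Pn by [].
split; rewrite ?primsE.
- exact: isa_step_supp.
- exact: isa_step_sqr0.
- move=> i p /setUP Pip; rewrite isa_step_prim_entry //.
  by case: Pip => [/prim_facts [] | /new_prim_facts []] => ? *; split=> //; lia.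
- move=> i1 i2 p /setUP [P1 | Pn1] /setUP [P2 | Pn2].
  + exact: (inv_col_uniq inv P1 P2).
  + by move: (new_prim_facts Pn2) => [_ _ /existsPn /(_ i1)]; rewrite P1.
  + by move: (new_prim_facts Pn1) => [_ _ /existsPn /(_ i2)]; rewrite P2.
  + have [d1 _ _ _] := new_prim_facts Pn1; have [d2 _ _ _] := new_prim_facts Pn2.
    by apply: val_inj => /=; lia.
- move=> i p1 p2 /setUP [P1 | Pn1] /setUP [P2 | Pn2].
  + exact: (inv_row_uniq inv P1 P2).
  + by move: (new_prim_facts Pn2) => [_ _ _ /existsPn /(_ p1)]; rewrite P1.
  + by move: (new_prim_facts Pn1) => [_ _ _ /existsPn /(_ p2)]; rewrite P2.
  + have [d1 _ _ _] := new_prim_facts Pn1; have [d2 _ _ _] := new_prim_facts Pn2.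
    by apply: val_inj => /=; lia.
- exact: isa_step_band.
Qed.

End Step.
End Invariant.

Section Run.
Variables (F : fieldType) (m : nat) (blk : 'I_m -> nat) (D : 'M[F]_m).
Hypothesis inv0 : isa_inv blk (IsaState D set0) 0.

Lemma isa_run_inv s : isa_inv blk (isa_run D s) s.
Proof. by elim: s => [|s IH] //=; apply: isa_step_inv. Qed.

Lemma isa_run_prims_mono s s' : (s <= s')%N ->
  st_prims (isa_run D s) \subset st_prims (isa_run D s').
Proof.
move=> /subnK <-; elim: (s' - s)%N => [|k IH] //=.
exact: subset_trans IH (subsetUl _ _).
Qed.

Section Swept.
Variable s : nat.
Hypothesis swept : forall a c : 'I_m, (c <= a + s)%N.
Let M := st_mat (isa_run D s).
Let P := st_prims (isa_run D s).

(* Expand [(M *m M) i j = 0] along row [i]: the term of the pivot column [p]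
   is the only one left, because every other nonzero [M i l] lies above a
   pivot of a lower row, whose row vanishes by descending induction. *)
Lemma prim_col_row0 (i p j : 'I_m) : (i, p) \in P -> M p j = 0.
Proof.
have inv := isa_run_inv s.
move: {2}(m - i)%N (leqnn (m - i)%N) => k; elim: k i p j => [|k IH] i p j mik Pip.
  by have := ltn_ord i; lia.
have : \sum_l M i l * M l j = 0.
  by move/matrixP: (inv_sqr0 inv) => /(_ i j); rewrite !mxE.
have [Mip _] := inv_prim inv Pip.
rewrite (bigD1 p) //= big1 ?addr0 => [/eqP | l lp].
  by rewrite mulf_eq0 (negbTE Mip) => /eqP.
apply/eqP; apply: contraT => /neq0_mulf [Mil Mlj].
have [i1 ii1 Pi1l] := inv_band inv (swept i l) Mil.
case: (ltngtP i i1) ii1 => [ii1 _ | // | /val_inj ei1 _].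
  by move: Mlj; rewrite (IH i1 l j) ?eqxx //; lia.
have Pil : (i, l) \in P by rewrite ei1.
by rewrite (inv_row_uniq inv Pip Pil) eqxx in lp.
Qed.

Lemma prim_row_not_prim_col (i : 'I_m) : row_has_prim P i -> ~~ col_has_prim P i.
Proof.
move=> /existsP [q Piq]; apply/existsP => -[i0 /prim_col_row0 Miq0].
by have [] := inv_prim (isa_run_inv s) Piq; rewrite /M Miq0 eqxx.
Qed.

End Swept.
End Run.

Lemma connection_matrix_inv (F : fieldType) (m b : nat) (blk : 'I_m -> nat)
  (D : 'M[F]_m) : connection_matrix b blk D -> isa_inv blk (IsaState D set0) 0.
Proof.
case=> _ _ DD supp; split => //= [i p | i1 i2 p | i p1 p2 | a c ca Mac]; rewrite ?inE //.
by have [ac _] := supp _ _ Mac; exfalso; lia.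
Qed.

Section BlockSimulation.
Variables (F : fieldType) (m b : nat) (blk : 'I_m -> nat) (D : 'M[F]_m).
Hypothesis hD : connection_matrix b blk D.
Variables (k : nat) (J : {set 'I_m}).
Hypothesis k_gt0 : (0 < k)%N.
Let Pfin := st_prims (isa_run D m.-1).
Hypothesis J_prim_cols : forall p, blk p = k.-1 -> (p \in J) = col_has_prim Pfin p.
Let Dk := Dblock blk D k J.
Let inv0 := connection_matrix_inv hD.

Lemma swept_full (a c : 'I_m) : (c <= a + m.-1)%N.
Proof. by have := ltn_ord c; lia. Qed.

Record block_sim (s : nat) : Prop := {
  sim_prims : forall x : pos m, (x \in st_prims (isa_run Dk s)) =
                                (x \in st_prims (isa_run D s)) && (blk x.2 == k);
  sim_mat : forall i j : 'I_m, blk i = k.-1 -> i \notin J -> blk j = k ->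
              st_mat (isa_run D s) i j = st_mat (isa_run Dk s) i j;
  sim_supp : forall i j : 'I_m, st_mat (isa_run Dk s) i j != 0 ->
               [&& blk i == k.-1, i \notin J & blk j == k]
}.

Lemma block_sim0 : block_sim 0.
Proof.
split => /= [x | i j bi iJ bj | i j]; rewrite ?inE // /Dk /Dblock mxE.
  by rewrite bi bj iJ !eqxx.
by case: ifP; rewrite ?eqxx.
Qed.

Lemma prim_row_notin_J s (i : 'I_m) : (s <= m.-1)%N -> blk i = k.-1 ->
  row_has_prim (st_prims (isa_run D s)) i -> i \notin J.
Proof.
move=> sm bi /existsP [q Piq]; rewrite J_prim_cols //.
apply: (prim_row_not_prim_col inv0 swept_full); apply/existsP; exists q.
exact: subsetP (isa_run_prims_mono D sm) _ Piq.
Qed.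

Section Step.
Variable s : nat.
Hypothesis s_lt : (s < m.-1)%N.
Hypothesis sim : block_sim s.
Let A := isa_run D s.
Let B := isa_run Dk s.
Let r := s.+1.
Let invA := isa_run_inv inv0 s.

Lemma prim_blk (i q : 'I_m) : (i, q) \in st_prims A -> blk q = (blk i).+1.
Proof. by move=> /(inv_prim invA) [/(inv_supp invA) []]. Qed.

Lemma col_has_prim_sim (j : 'I_m) : blk j = k ->
  col_has_prim (st_prims B) j = col_has_prim (st_prims A) j.
Proof.
move=> bj; apply/existsP/existsP => -[i Pij]; exists i; move: Pij.
  by rewrite (sim_prims sim) => /andP [].
by rewrite (sim_prims sim) /= bj eqxx andbT.
Qed.

Lemma row_has_prim_sim (i : 'I_m) : blk i = k.-1 ->
  row_has_prim (st_prims B) i = row_has_prim (st_prims A) i.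
Proof.
move=> bi; apply/existsP/existsP => -[q Piq]; exists q; move: Piq.
  by rewrite (sim_prims sim) => /andP [].
by rewrite (sim_prims sim) /= => Piq; rewrite Piq (prim_blk Piq) bi prednK ?eqxx.
Qed.

Lemma prim_col_sim (i d : 'I_m) : blk i = k.-1 ->
  prim_col (st_prims B) i d = prim_col (st_prims A) i d.
Proof.
move=> bi; rewrite /prim_col; congr odflt; apply: eq_pick => q /=.
rewrite (sim_prims sim) /=; have [Piq | //] := boolP ((i, q) \in st_prims A).
by rewrite (prim_blk Piq) bi prednK ?eqxx.
Qed.

Lemma marked_row_notin_J (i j : 'I_m) :
  ((i, j) \in markP r A) || ((i, j) \in markC r A) -> blk j = k ->
  blk i = k.-1 /\ i \notin J.
Proof.
move=> marked bj.
have /(inv_supp invA) [_ bji] : st_mat A i j != 0.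
  by case/orP: marked; rewrite ?in_markP ?in_markC => /and4P [].
have bi : blk i = k.-1 by rewrite -bj bji.
split=> //; apply: (prim_row_notin_J (s := r)) => //.
case/orP: marked => [Pnij | /markC_prim_col Piq]; apply/existsP.
  by exists j; rewrite /= in_setU Pnij orbT.
by exists (prim_col (st_prims A) i j); rewrite /= in_setU Piq.
Qed.

Lemma markP_sim (i j : 'I_m) :
  ((i, j) \in markP r B) = ((i, j) \in markP r A) && (blk j == k).
Proof.
have [/and3P [/eqP bi iJ /eqP bj] | out] := boolP [&& blk i == k.-1, i \notin J & blk j == k].
  by rewrite !in_markP (sim_mat sim) // col_has_prim_sim // row_has_prim_sim // bj eqxx andbT.
apply/idP/idP => [| /andP [marked /eqP bj]].
  by rewrite in_markP => /and4P [_ /(sim_supp sim)]; rewrite (negbTE out).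
have /marked_row_notin_J/(_ bj) [bi iJ] :
  ((i, j) \in markP r A) || ((i, j) \in markC r A) by rewrite marked.
by move: out; rewrite bi iJ bj !eqxx.
Qed.

Lemma markC_sim (i j : 'I_m) :
  ((i, j) \in markC r B) = ((i, j) \in markC r A) && (blk j == k).
Proof.
have [/and3P [/eqP bi iJ /eqP bj] | out] := boolP [&& blk i == k.-1, i \notin J & blk j == k].
  by rewrite !in_markC (sim_mat sim) // col_has_prim_sim // row_has_prim_sim // bj eqxx andbT.
apply/idP/idP => [| /andP [marked /eqP bj]].
  by rewrite in_markC => /and4P [_ /(sim_supp sim)]; rewrite (negbTE out).
have /marked_row_notin_J/(_ bj) [bi iJ] :
  ((i, j) \in markP r A) || ((i, j) \in markC r A) by rewrite marked orbT.
by move: out; rewrite bi iJ bj !eqxx.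
Qed.


Lemma sweep_mx_sim (l j : 'I_m) : blk j = k -> sweep_mx r B l j = sweep_mx r A l j.
Proof.
move=> bj; have [/existsP [x Cxj] | /existsPn noC] :=
  boolP [exists x, (x, j) \in markC r A]; last first.
  by rewrite !sweep_mx_col0 // => x; rewrite markC_sim (negbTE (noC x)).
have CBxj : (x, j) \in markC r B by rewrite markC_sim Cxj bj eqxx.
have /marked_row_notin_J/(_ bj) [bx xJ] :
  ((x, j) \in markP r A) || ((x, j) \in markC r A) by rewrite Cxj orbT.
have bq : blk (prim_col (st_prims A) x j) = k.
  by rewrite (prim_blk (markC_prim_col Cxj)) bx prednK.
rewrite (sweep_mx_cob_col _ CBxj) (sweep_mx_cob_col _ Cxj).
by rewrite /sweep_coef /= !prim_col_sim // -!(sim_mat sim).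
Qed.

Lemma col_swept_sim_supp (l c : 'I_m) :
  col_swept r B l c != 0 -> [&& blk l == k.-1, l \notin J & blk c == k].
Proof.
rewrite col_sweptE => /neq0_subr [/(sim_supp sim) // | /neq0_sumr_exists [l' _]].
move=> /neq0_mulf [/(sim_supp sim) /and3P [-> -> _] /sweep_mx_neq0 [x [Cxc _]]].
by move: Cxc; rewrite in_markC => /and4P [_ /(sim_supp sim) /and3P [_ _ ->] _ _].
Qed.

(* The row operations of the block run only move rows of block [k]. *)
Lemma sweep_mx_col_swept_sim0 (a l c : 'I_m) : sweep_mx r B a l * col_swept r B l c = 0.
Proof.
apply/eqP; apply: contraT => /neq0_mulf [/sweep_mx_neq0 [x [Cxl _]]].
move=> /col_swept_sim_supp /and3P [/eqP bl _ _].
move: Cxl; rewrite in_markC => /and4P [_ /(sim_supp sim) /and3P [_ _ /eqP bl'] _ _].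
by move: bl; rewrite bl'; lia.
Qed.

Lemma isa_step_mat_sim (i j : 'I_m) : blk i = k.-1 -> i \notin J -> blk j = k ->
  st_mat (isa_step r A) i j = st_mat (isa_step r B) i j.
Proof.
move=> bi iJ bj; rewrite !isa_step_matE.
rewrite [X in _ = _ + X]big1 => [|l _]; last exact: sweep_mx_col_swept_sim0.
rewrite [X in _ + X = _]big1 => [|l _]; last first.
  apply/eqP; apply: contraT => /neq0_mulf [/sweep_mx_neq0 [x [Cxl Ei]] _].
  suff : col_has_prim Pfin i by rewrite -J_prim_cols // (negbTE iJ).
  apply/existsP; exists x; rewrite Ei.
  exact: subsetP (isa_run_prims_mono D (ltnW s_lt)) _ (markC_prim_col Cxl).
rewrite !addr0 !col_sweptE (sim_mat sim) //; congr (_ - _); apply: eq_bigr => l _.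
rewrite sweep_mx_sim //.
have [-> | /sweep_mx_neq0 [x [Cxj ->]]] := eqVneq (sweep_mx r A l j) 0; first by rewrite !mulr0.
have /marked_row_notin_J/(_ bj) [bx _] :
  ((x, j) \in markP r A) || ((x, j) \in markC r A) by rewrite Cxj orbT.
by rewrite (sim_mat sim) // (prim_blk (markC_prim_col Cxj)) bx prednK.
Qed.

Lemma block_sim_step : block_sim s.+1.
Proof.
split.
- by move=> [i j]; rewrite /= !in_setU (sim_prims sim) markP_sim andb_orl.
- exact: isa_step_mat_sim.
- move=> i j; rewrite /= isa_step_matE => /neq0_addr [/col_swept_sim_supp // |].
  by move=> /neq0_sumr_exists [l _]; rewrite sweep_mx_col_swept_sim0 eqxx.
Qed.

End Step.

Lemma block_sim_run s : (s <= m.-1)%N -> block_sim s.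
Proof.
elim: s => [|s IH] s_le; first exact: block_sim0.
by apply: block_sim_step => //; apply: IH; lia.
Qed.

(* Rows of [J] are pivot columns of the previous block: they vanish in the final
   matrix of the full run, and in [Dk] from the start. *)
Lemma isa_final_mat_sim (i j : 'I_m) : blk i = k.-1 -> blk j = k ->
  st_mat (isa_run D m.-1) i j = st_mat (isa_run Dk m.-1) i j.
Proof.
move=> bi bj; have sim := block_sim_run (leqnn m.-1).
have [iJ | iNJ] := boolP (i \in J); last exact: (sim_mat sim).
have -> : st_mat (isa_run Dk m.-1) i j = 0.
  by apply/eqP; apply: contraT => /(sim_supp sim); rewrite iJ andbF.
move: iJ; rewrite J_prim_cols // => /existsP [i0 Pi0i].
exact: (prim_col_row0 inv0 swept_full j Pi0i).
Qed.

Lemma prim_cols_Dblock (p : 'I_m) : blk p = k -> (p \in prim_cols Dk) = col_has_prim Pfin p.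
Proof.
move=> bp; have sim := block_sim_run (leqnn m.-1).
rewrite inE; apply/existsP/existsP => -[i Pip]; exists i; move: Pip.
  by rewrite (sim_prims sim) => /andP [].
by rewrite (sim_prims sim) /= bp eqxx andbT.
Qed.

Lemma isa_prim_at_Dblock r : (1 <= r <= m.-1)%N ->
  isa_prim_at Dk r = [set x in isa_prim_at D r | blk x.2 == k].
Proof.
move=> /andP [r_gt0 r_le]; have r_lt : (r.-1 < m.-1)%N by lia.
apply/setP => -[i j]; rewrite inE /isa_prim_at.
by have := markP_sim r_lt (block_sim_run (ltnW r_lt)) i j; rewrite prednK.
Qed.

Lemma isa_cob_at_Dblock r : (1 <= r <= m.-1)%N ->
  isa_cob_at Dk r = [set x in isa_cob_at D r | blk x.2 == k].
Proof.
move=> /andP [r_gt0 r_le]; have r_lt : (r.-1 < m.-1)%N by lia.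
apply/setP => -[i j]; rewrite inE /isa_cob_at.
by have := markC_sim r_lt (block_sim_run (ltnW r_lt)) i j; rewrite prednK.
Qed.

End BlockSimulation.

Section Connection.
Variables (F : fieldType) (m b : nat) (blk : 'I_m -> nat) (D : 'M[F]_m).
Hypothesis hD : connection_matrix b blk D.
Let inv0 := connection_matrix_inv hD.

Lemma bssa_J_prim_cols k : (0 < k)%N -> forall p, blk p = k.-1 ->
  (p \in bssa_J blk D k.-1) = col_has_prim (st_prims (isa_run D m.-1)) p.
Proof.
elim: k => [// | [|k] IH] _ p bp /=; last exact: (prim_cols_Dblock hD (ltn0Sn k) (IH isT) bp).
rewrite inE; apply/esym/negbTE/existsPn => i; apply/negP => Pip.
have inv := isa_run_inv inv0 m.-1.
by have [/(inv_supp inv) [_]] := inv_prim inv Pip; rewrite bp.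
Qed.

Lemma isa_run_col_blk s (i j : 'I_m) :
  st_mat (isa_run D s) i j != 0 -> (1 <= blk j < b.+1)%N.
Proof.
case: hD => blk_le _ _ _ /(inv_supp (isa_run_inv inv0 s)) [_ bj].
by rewrite ltnS blk_le bj.
Qed.

Lemma isa_prim_at_col_blk r :
  {in isa_prim_at D r, forall x : pos m, (1 <= blk x.2 < b.+1)%N}.
Proof. by move=> [i j]; rewrite in_markP => /and4P [_ /isa_run_col_blk]. Qed.

Lemma isa_cob_at_col_blk r :
  {in isa_cob_at D r, forall x : pos m, (1 <= blk x.2 < b.+1)%N}.
Proof. by move=> [i j]; rewrite in_markC => /and4P [_ /isa_run_col_blk]. Qed.

End Connection.

Theorem mainTheorem6 (F : fieldType) (m : nat) (hm : (0 < m)%N)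
  (b : nat) (blk : 'I_m -> nat) (D : 'M[F]_m)
  (hD : connection_matrix b blk D) :
  (forall k : nat, (1 <= k <= b)%N ->
     forall i j : 'I_m, blk i = k.-1 -> blk j = k ->
       isa_mat D m i j = isa_mat (bssa_D blk D k) m i j)
  /\
  (forall r : nat, (1 <= r <= m.-1)%N ->
     isa_prim_at D r = \bigcup_(1 <= k < b.+1) isa_prim_at (bssa_D blk D k) r
     /\ isa_cob_at D r = \bigcup_(1 <= k < b.+1) isa_cob_at (bssa_D blk D k) r).
Proof.
have J_ok k (k_gt0 : (0 < k)%N) := bssa_J_prim_cols hD k_gt0.
split=> [k /andP [k_gt0 _] i j | r r_range].
  exact: (isa_final_mat_sim hD k_gt0 (J_ok k k_gt0)).
split.
  rewrite {1}(bigcup_fibers (isa_prim_at_col_blk hD (r := r))).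
  by apply: eq_big_nat => k /andP [k_gt0 _]; rewrite (isa_prim_at_Dblock hD k_gt0 (J_ok k k_gt0) r_range).
rewrite {1}(bigcup_fibers (isa_cob_at_col_blk hD (r := r))).
by apply: eq_big_nat => k /andP [k_gt0 _]; rewrite (isa_cob_at_Dblock hD k_gt0 (J_ok k k_gt0) r_range).
Qed.
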